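(* Let $S$ be a completely simple semigroup. If $S$ is DSC, then $S$ is a group.
   Context: For a semigroup $S$, a diagonal subsemigroup of $S\times S$ is a subsemigroup of $S\times S$ containing $\Delta=\{(s,s)\colon s\in S\}$. A congruence on $S$ is a diagonal subsemigroup of $S\times S$ that is symmetric and transitive. A semigroup $S$ is DSC if every diagonal subsemigroup of $S\times S$ is a congruence on $S$. An idempotent $e$ of $S$ is primitive if it is minimal in the order $e\le f\iff ef=fe=e$ on idempotents. A semigroup is completely simple if it is simple (has no ideals other than itself) and has a primitive idempotent. *)

Definition associative {S : Type} (mul : S -> S -> S) : Prop :=
  forall x y z, mul x (mul y z) = mul (mul x y) z.

(* A subset R of S x S (given as a binary relation) is a subsemigroup of
   S x S (componentwise product) containing the diagonal. *)
Definition diagonal_subsemigroup {S : Type} (mul : S -> S -> S)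
  (R : S -> S -> Prop) : Prop :=
  (forall s, R s s) /\
  (forall a b c d, R a b -> R c d -> R (mul a c) (mul b d)).

Definition congruence {S : Type} (mul : S -> S -> S) (R : S -> S -> Prop) : Prop :=
  diagonal_subsemigroup mul R /\
  (forall a b, R a b -> R b a) /\
  (forall a b c, R a b -> R b c -> R a c).

Definition DSC {S : Type} (mul : S -> S -> S) : Prop :=
  forall R : S -> S -> Prop, diagonal_subsemigroup mul R -> congruence mul R.

Definition ideal {S : Type} (mul : S -> S -> S) (I : S -> Prop) : Prop :=
  (exists x, I x) /\ (forall s x, I x -> I (mul s x) /\ I (mul x s)).

Definition simple {S : Type} (mul : S -> S -> S) : Prop :=
  forall I : S -> Prop, ideal mul I -> forall x, I x.

Definition idempotent {S : Type} (mul : S -> S -> S) (e : S) : Prop :=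
  mul e e = e.

Definition idem_le {S : Type} (mul : S -> S -> S) (e f : S) : Prop :=
  mul e f = e /\ mul f e = e.

Definition primitive {S : Type} (mul : S -> S -> S) (e : S) : Prop :=
  idempotent mul e /\
  forall f, idempotent mul f -> idem_le mul f e -> f = e.

Definition completely_simple {S : Type} (mul : S -> S -> S) : Prop :=
  simple mul /\ exists e, primitive mul e.

Definition is_group {S : Type} (mul : S -> S -> S) : Prop :=
  exists e : S, (forall x, mul e x = x /\ mul x e = x) /\
                (forall x, exists y, mul x y = e /\ mul y x = e).

(** In a simple semigroup S = SxS for every x.  If e is a primitive
    idempotent and b is arbitrary, write e = u (e b) v; then e b v e u e is an
    idempotent below e, hence equals e, so e ∈ e b S.  Writing a = p e q this
    gives a ∈ a c S for all a, c.  Consequently the relation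
    "v ∈ uS, or (u ∈ xS and v ∈ yS)" is a diagonal subsemigroup containing
    (x, y); by DSC it is symmetric, so x ∈ yS.  Dually x ∈ Sy, and a semigroup
    with an idempotent in which all such equations are solvable is a group. *)

From Stdlib Require Import Setoid.

Definition opp_mul {S : Type} (mul : S -> S -> S) : S -> S -> S :=
  fun x y => mul y x.

Definition right_multiple {S : Type} (mul : S -> S -> S) (y x : S) : Prop :=
  exists t, y = mul x t.

Section Duality.
Variables (S : Type) (mul : S -> S -> S).

Lemma associative_opp : associative mul -> associative (opp_mul mul).
Proof. intros assoc x y z. unfold opp_mul. symmetry. apply assoc. Qed.

Lemma ideal_opp I : ideal (opp_mul mul) I -> ideal mul I.
Proof.
  intros [Hne Hmul]. split; [exact Hne|].
  intros s x Hx. destruct (Hmul s x Hx). split; assumption.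
Qed.

Lemma simple_opp : simple mul -> simple (opp_mul mul).
Proof. intros Hs I HI. apply Hs, ideal_opp, HI. Qed.

Lemma primitive_opp e : primitive mul e -> primitive (opp_mul mul) e.
Proof.
  intros [He Hmin]. split; [exact He|].
  intros f Hf [H1 H2]. apply Hmin; [exact Hf | split; assumption].
Qed.

Lemma completely_simple_opp :
  completely_simple mul -> completely_simple (opp_mul mul).
Proof.
  intros [Hs [e He]]. split; [apply simple_opp, Hs|].
  exists e. apply primitive_opp, He.
Qed.

Lemma diagonal_subsemigroup_opp R :
  diagonal_subsemigroup (opp_mul mul) R -> diagonal_subsemigroup mul R.
Proof.
  intros [Hrefl Hmul]. split; [exact Hrefl|].
  intros a b c d Hab Hcd. exact (Hmul _ _ _ _ Hcd Hab).
Qed.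

Lemma DSC_opp : DSC mul -> DSC (opp_mul mul).
Proof.
  intros Hdsc R HR.
  destruct (Hdsc R (diagonal_subsemigroup_opp R HR)) as [_ [Hsym Htrans]].
  split; [exact HR | split; assumption].
Qed.

End Duality.

Lemma simple_sandwich (S : Type) (mul : S -> S -> S) :
  associative mul -> simple mul -> forall x y, exists u v, y = mul (mul u x) v.
Proof.
  intros assoc Hs x. apply (Hs (fun y => exists u v, y = mul (mul u x) v)).
  split.
  - exists (mul (mul x x) x), x, x. reflexivity.
  - intros s z [u [v H]]. split.
    + exists (mul s u), v. rewrite H, !assoc. reflexivity.
    + exists u, (mul v s). rewrite H, !assoc. reflexivity.
Qed.

Section CompletelySimple.
Variables (S : Type) (mul : S -> S -> S).
Local Infix "*" := mul.
Hypothesis assoc : associative mul.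
Hypothesis Hsimple : simple mul.

Lemma primitive_right_divides e b :
  primitive mul e -> exists t, e * (b * t) = e.
Proof.
  intros [He Hmin].
  destruct (simple_sandwich S mul assoc Hsimple (e * b) e) as [u [v Huv]].
  assert (Huv' : forall z, u * (e * (b * (v * z))) = e * z).
  { intro z. rewrite Huv at 2. rewrite <- !assoc. reflexivity. }
  assert (Hee : forall z, e * (e * z) = e * z).
  { intro z. rewrite assoc, He. reflexivity. }
  exists (v * (e * (u * e))).
  apply Hmin; [unfold idempotent | split]; repeat rewrite <- assoc.
  - rewrite Hee, Huv', !Hee. reflexivity.
  - rewrite He. reflexivity.
  - rewrite Hee. reflexivity.
Qed.

Lemma right_multiple_mul_r a c : (exists e, primitive mul e) ->
  right_multiple mul a (a * c).
Proof.
  intros [e He].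
  destruct (simple_sandwich S mul assoc Hsimple e a) as [p [q Ha]].
  destruct (primitive_right_divides e (q * c) He) as [t Ht].
  assert (Ht' : forall z, e * (q * (c * (t * z))) = e * z).
  { intro z. rewrite <- Ht at 2. rewrite <- !assoc. reflexivity. }
  exists (t * q). rewrite Ha at 2. rewrite <- !assoc, Ht', assoc, <- Ha.
  reflexivity.
Qed.

End CompletelySimple.

Section DSCRightSimple.
Variables (S : Type) (mul : S -> S -> S).
Local Infix "*" := mul.
Hypothesis assoc : associative mul.
Hypothesis right_multiple_mul : forall a c, right_multiple mul a (a * c).
Hypothesis Hdsc : DSC mul.

Lemma right_multiple_refl u : right_multiple mul u u.
Proof.
  destruct (right_multiple_mul u u) as [t Ht]. exists (u * t).
  rewrite assoc. exact Ht.
Qed.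

Lemma DSC_right_multiple x y : right_multiple mul x y.
Proof.
  pose (R u v := right_multiple mul v u \/
                 (right_multiple mul u x /\ right_multiple mul v y)).
  assert (HR : diagonal_subsemigroup mul R).
  { split.
    - intro u. left. apply right_multiple_refl.
    - intros a b c d [[t Hb] | [[t1 Ha] [t2 Hb]]] _.
      + left. destruct (right_multiple_mul a c) as [s Hs].
        exists (s * (t * d)). rewrite Hb. rewrite Hs at 1.
        rewrite !assoc. reflexivity.
      + right. split.
        * exists (t1 * c). rewrite Ha, assoc. reflexivity.
        * exists (t2 * d). rewrite Hb, assoc. reflexivity. }
  destruct (Hdsc R HR) as [_ [Hsym _]].
  assert (Hxy : R x y) by (right; split; apply right_multiple_refl).
  destruct (Hsym _ _ Hxy) as [H | [_ H]]; exact H.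
Qed.

End DSCRightSimple.

Lemma group_of_idempotent_divisible (S : Type) (mul : S -> S -> S) (e : S) :
  associative mul -> idempotent mul e ->
  (forall x y, exists t, x = mul y t) -> (forall x y, exists t, x = mul t y) ->
  is_group mul.
Proof.
  intros assoc He Hr Hl.
  assert (Hunit : forall x, mul e x = x /\ mul x e = x).
  { intro x. destruct (Hr x e) as [t Ht]. destruct (Hl x e) as [s Hs]. split.
    - rewrite Ht, assoc, He. reflexivity.
    - rewrite Hs, <- assoc, He. reflexivity. }
  exists e. split; [exact Hunit|].
  intro x. destruct (Hr e x) as [t Ht]. destruct (Hl e x) as [s Hs].
  assert (Hst : s = t).
  { transitivity (mul s e); [symmetry; apply Hunit|].
    rewrite Ht, assoc, <- Hs. apply Hunit. }
  exists t. subst s. split; symmetry; assumption.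
Qed.

Lemma completely_simple_DSC_right_multiple (S : Type) (mul : S -> S -> S) :
  associative mul -> completely_simple mul -> DSC mul ->
  forall x y, right_multiple mul x y.
Proof.
  intros assoc [Hs He] Hdsc.
  apply DSC_right_multiple; [exact assoc | | exact Hdsc].
  intros a c. exact (right_multiple_mul_r S mul assoc Hs a c He).
Qed.

Theorem mainTheorem3 (S : Type) (mul : S -> S -> S) :
  associative mul -> completely_simple mul -> DSC mul -> is_group mul.
Proof.
  intros assoc Hcs Hdsc.
  pose proof Hcs as [_ [e [He _]]].
  apply (group_of_idempotent_divisible S mul e assoc He).
  - exact (completely_simple_DSC_right_multiple S mul assoc Hcs Hdsc).
  - exact (completely_simple_DSC_right_multiple S (opp_mul mul)
             (associative_opp S mul assoc) (completely_simple_opp S mul Hcs)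
             (DSC_opp S mul Hdsc)).
Qed.
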